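(* Let $m\ge 1$, and let $(\Gamma,\tau)$ be a translation quiver such that for any arrow $x\to y$ in $\Gamma$, $x$ is projective whenever $y$ is projective. Then the translation quiver $(\Gamma^m,\tau^m)$ has the same property: for any arrow $x\to y$ in $\Gamma^m$, $x$ is projective in $(\Gamma^m,\tau^m)$ whenever $y$ is projective in $(\Gamma^m,\tau^m)$.
   Context: A translation quiver is a pair $(\Gamma,\tau)$ with the following properties: $\Gamma$ is a locally finite quiver (multiple arrows allowed) with vertex set $\Gamma_0$; $\tau:\Gamma_0'\to\Gamma_0$ is an injective map defined on a subset $\Gamma_0'\subseteq\Gamma_0$; and for all $X\in\Gamma_0$ and $Y\in\Gamma_0'$ the number of arrows $X\to Y$ equals the number of arrows $\tau(Y)\to X$. Vertices where the translation is not defined are called projective; in $(\Gamma^m,\tau^m)$, a vertex is projective if $\tau^m$ is not defined on it. A path $x_0\to x_1\to\cdots\to x_m$ in $\Gamma$ is sectional if $\tau x_{i+1}\ne x_{i-1}$ for every $i=1,\dots,m-1$ for which $\tau x_{i+1}$ is defined. The quiver $\Gamma^m$ has the same vertices as $\Gamma$ and one arrow $x\to y$ for each sectional path of length $m$ from $x$ to $y$ in $\Gamma$. The map $\tau^m$ is the $m$-fold composite of $\tau$, defined where this composite is defined. Under the hypothesis, $(\Gamma^m,\tau^m)$ is a translation quiver. *)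

From Stdlib Require Import List.
Import ListNotations.

(* A quiver: vertex type V, arrow type A, source and target maps.
   A translation is a partial map tau : V -> option V
   (tau x = None  <->  x is projective). *)

Fixpoint is_path {V A : Type} (src tgt : A -> V) (x : V) (p : list A) (y : V)
  : Prop :=
  match p with
  | [] => x = y
  | a :: p' => src a = x /\ is_path src tgt (tgt a) p' y
  end.

(* A path a_1 a_2 ... a_m with a_i : x_{i-1} -> x_i is sectional iff
   tau x_{i+1} <> x_{i-1} whenever tau x_{i+1} is defined, i.e. for each
   consecutive pair of arrows a_i, a_{i+1}: tau (tgt a_{i+1}) <> Some (src a_i). *)
Fixpoint sectional {V A : Type} (src tgt : A -> V) (tau : V -> option V)
  (p : list A) : Prop :=
  match p with
  | a :: ((b :: _) as p') =>
      tau (tgt b) <> Some (src a) /\ sectional src tgt tau p'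
  | _ => True
  end.

(* Arrows x -> y in Gamma^m correspond to sectional paths of length m. *)
Definition arrow_pow {V A : Type} (src tgt : A -> V) (tau : V -> option V)
  (m : nat) (x y : V) : Prop :=
  exists p : list A, length p = m /\ is_path src tgt x p y /\
                     sectional src tgt tau p.

Fixpoint tau_iter {V : Type} (tau : V -> option V) (m : nat) (x : V)
  : option V :=
  match m with
  | 0 => Some x
  | S k => match tau_iter tau k x with
           | Some z => tau z
           | None => None
           end
  end.

Definition projective {V : Type} (tau : V -> option V) (x : V) : Prop :=
  tau x = None.

Definition bijective_map {X Y : Type} (f : X -> Y) : Prop :=
  exists g : Y -> X, (forall x, g (f x) = x) /\ (forall y, f (g y) = y).

Definition arrows_between {V A : Type} (src tgt : A -> V) (X Y : V) : Type :=
  { a : A | src a = X /\ tgt a = Y }.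

Definition is_translation_quiver {V A : Type} (src tgt : A -> V)
  (tau : V -> option V) : Prop :=
  (forall x : V, exists l : list A,
      forall a : A, (src a = x \/ tgt a = x) -> In a l) /\
  (forall y1 y2 z : V, tau y1 = Some z -> tau y2 = Some z -> y1 = y2) /\
  (forall X Y Z : V, tau Y = Some Z ->
     exists f : arrows_between src tgt X Y -> arrows_between src tgt Z X,
       bijective_map f).

From Stdlib Require Import List.

(* Hence if y is
   projective so is x, and otherwise the arrow translates to tau x -> tau y,
   so induction on k shows that projectivity for tau^k propagates backwards
   along arrows, and then along any path.  Neither sectionality nor m >= 1
   plays a role. *)

Lemma tau_iter_Sl {V : Type} (tau : V -> option V) (k : nat) (x : V) :
  tau_iter tau (S k) x =
  match tau x with Some z => tau_iter tau k z | None => None end.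
Proof.
  induction k as [|k IH]; simpl.
  - destruct (tau x); reflexivity.
  - simpl in IH. rewrite IH. destruct (tau x); reflexivity.
Qed.

Lemma translation_quiver_mesh_arrow {V A : Type} (src tgt : A -> V)
    (tau : V -> option V) :
  is_translation_quiver src tgt tau ->
  forall (a : A) (z : V), tau (tgt a) = Some z ->
    exists b : A, src b = z /\ tgt b = src a.
Proof.
  intros [_ [_ mesh]] a z Hz.
  destruct (mesh (src a) (tgt a) z Hz) as [f _].
  destruct (f (exist _ a (conj eq_refl eq_refl))) as [b Hb].
  exists b; exact Hb.
Qed.

Section ProjectivePropagation.

Variables (V A : Type) (src tgt : A -> V) (tau : V -> option V).

Hypothesis mesh_arrow : forall (a : A) (z : V), tau (tgt a) = Some z ->
  exists b : A, src b = z /\ tgt b = src a.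

Hypothesis projective_src :
  forall a : A, projective tau (tgt a) -> projective tau (src a).

Lemma translate_arrow (a : A) (u : V) : tau (src a) = Some u ->
  exists (v : V) (c : A), tau (tgt a) = Some v /\ src c = u /\ tgt c = v.
Proof.
  intros Hu.
  destruct (tau (tgt a)) as [v|] eqn:Hv.
  - destruct (mesh_arrow a v Hv) as [b [Hb_src Hb_tgt]].
    rewrite <- Hb_tgt in Hu.
    destruct (mesh_arrow b u Hu) as [c [Hc_src Hc_tgt]].
    exists v, c. rewrite Hc_tgt, Hb_src. auto.
  - unfold projective in projective_src.
    rewrite (projective_src a Hv) in Hu. discriminate.
Qed.

Lemma projective_tau_iter_src (k : nat) (a : A) :
  projective (tau_iter tau k) (tgt a) -> projective (tau_iter tau k) (src a).
Proof.
  unfold projective. revert a.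
  induction k as [|k IH]; intros a Hy; [discriminate|].
  rewrite tau_iter_Sl in *.
  destruct (tau (src a)) as [u|] eqn:Hu; [|reflexivity].
  destruct (translate_arrow a u Hu) as [v [c [Hv [Hc_src Hc_tgt]]]].
  rewrite Hv in Hy. rewrite <- Hc_src. apply IH. rewrite Hc_tgt. exact Hy.
Qed.

Lemma projective_tau_iter_path (k : nat) (p : list A) (x y : V) :
  is_path src tgt x p y ->
  projective (tau_iter tau k) y -> projective (tau_iter tau k) x.
Proof.
  revert x. induction p as [|a p IH]; intros x Hp Hy; simpl in Hp.
  - subst; exact Hy.
  - destruct Hp as [Ha Hp]. rewrite <- Ha.
    apply projective_tau_iter_src, (IH _ Hp Hy).
Qed.

End ProjectivePropagation.

Theorem proposition6p3 (V A : Type) (src tgt : A -> V) (tau : V -> option V)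
  (m : nat) (Hm : 1 <= m)
  (HTQ : is_translation_quiver src tgt tau)
  (Hproj : forall a : A, projective tau (tgt a) -> projective tau (src a)) :
  forall x y : V, arrow_pow src tgt tau m x y ->
    projective (tau_iter tau m) y -> projective (tau_iter tau m) x.
Proof.
  intros x y [p [_ [Hp _]]].
  exact (projective_tau_iter_path V A src tgt tau
           (translation_quiver_mesh_arrow src tgt tau HTQ) Hproj m p x y Hp).
Qed.
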